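(* Let $q$ be a prime power and $n\ge 1$ an integer. For every integer $k$ with $1\le k< n(q-1)$ we have $\dim(C_{n,k}^q)<\dim(C_{n,k+1}^q)$.
   Context: For a prime power $q$ and integers $n\ge 1$, $k\ge 0$, the projective Reed-Muller code $C_{n,k}^q\subseteq \mathbb{F}_q^N$, $N=\frac{q^{n+1}-1}{q-1}$, is defined as follows. For each point of $\mathbb{P}^n(\mathbb{F}_q)$ choose the affine representative $(p_0,\dots,p_n)\in\mathbb{F}_q^{n+1}\setminus\{0\}$ whose left-most nonzero coordinate equals $1$, and fix an ordering $P_1',\dots,P_N'$ of these representatives. Then $C_{n,k}^q=\{(F(P_1'),\dots,F(P_N')) : F\in \mathbb{F}_q[x_0,\dots,x_n]_k\}$, where $\mathbb{F}_q[x_0,\dots,x_n]_k$ is the space of homogeneous polynomials of degree $k$ together with $0$ (so $C_{n,0}^q$ is spanned by the all-ones vector $\mathbf{1}$). *)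

From HB Require Import structures.
From mathcomp Require Import all_boot all_algebra.
From mathcomp Require Import mpoly.
From mathcomp Require Import boolp.

Set Implicit Arguments.
Unset Strict Implicit.
Unset Printing Implicit Defensive.

Import GRing.Theory.
Local Open Scope ring_scope.

(* A vector x in F^(n+1) is the chosen affine representative of a point of
   P^n(F): its left-most nonzero coordinate equals 1 (so in particular x <> 0). *)
Definition normalized (F : fieldType) (m : nat) (x : {ffun 'I_m -> F}) : bool :=
  [exists i : 'I_m, (x i == 1) && [forall j : 'I_m, (j < i)%N ==> (x j == 0)]].

Definition PPoint (F : finFieldType) (n : nat) : finType :=
  {x : {ffun 'I_n.+1 -> F} | normalized x}.

Definition NPts (F : finFieldType) (n : nat) : nat := #|PPoint F n|.

Definition evalvec (F : finFieldType) (n : nat) (p : {mpoly F[n.+1]})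
  : 'rV[F]_(NPts F n) :=
  \row_(i < NPts F n) p.@[fun j => (val (@enum_val (PPoint F n) predT i)) j].

Definition PRMcode (F : finFieldType) (n k : nat) : {set 'rV[F]_(NPts F n)} :=
  [set v | `[< exists2 p : {mpoly F[n.+1]}, p \is k.-homog & v = evalvec p >] ].

(* Dimension over F of the code (the F-span of its codewords, which is the
   code itself since it is a linear subspace). *)
Definition PRMdim (F : finFieldType) (n k : nat) : nat :=
  \dim <<enum (PRMcode F n k)>>%VS.

From mathcomp Require Import all_boot all_algebra all_field mpoly boolp zify.
Set Implicit Arguments. Unset Strict Implicit. Unset Printing Implicit Defensive.
Import GRing.Theory.
Local Open Scope ring_scope.

(* Filter the points of P^n by T_j, the points whose first j coordinates vanish.
   Multiplying by x_j turns a form of degree k vanishing on T_(j+1) into one of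
   degree k + 1 that agrees with it on T_j, so every graded piece of C_(n,k) for
   this filtration lies in the corresponding piece of C_(n,k+1); hence
   dim C_(n,k) <= dim C_(n,k+1).  For strictness take exponents a with a_0 = 0,
   a_t <= q - 1 and |a| = k, and the linear form
   L(v) = sum_P v(P) prod_(t >= 1) P_t^(q-1-a_t).  L kills C_(n,k): the sum of a
   form of degree n(q-1) over P^n is minus its sum over F^(n+1), which is 0 since
   n(q-1) < (n+1)(q-1).  But L(x_0 x^a) = sum_P prod_t P_t^(q-1) = (-1)^n, while
   x_0 x^a vanishes on T_1, so it lies in the 0-th graded piece of C_(n,k+1) and
   not in that of C_(n,k). *)

Section PowerSums.
Variable F : finFieldType.
Local Notation q := #|F|.

Lemma card_finField_pred_gt0 : (0 < q.-1)%N.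
Proof. by rewrite -ltnS prednK ?finNzRing_gt1 // ltnW ?finNzRing_gt1. Qed.

(* Translation by 1 permutes F, so q * 1 = sum (t + 1) - sum t = 0. *)
Lemma natr_card_finField : q%:R = 0 :> F.
Proof.
have: \sum_(t : F) (t + 1) = \sum_(t : F) t.
  by rewrite [RHS](reindex_inj (addIr 1)).
rewrite big_split /= sumr_const => /eqP.
by rewrite -subr_eq0 addrAC subrr add0r => /eqP.
Qed.

Lemma card_finField_nz : #|[pred t : F | t != 0]| = q.-1.
Proof.
rewrite -(card_finField_unit F) -(card_imset _ val_inj).
apply: eq_card => x; rewrite !inE; apply/idP/imsetP => [x0|[u _ ->]].
  by rewrite -unitfE in x0; exists (FinRing.unit F x0).
by rewrite -unitfE (valP u).
Qed.

Lemma expf_card_pred (t : F) : t != 0 -> t ^+ q.-1 = 1.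
Proof.
move=> t0; apply: (mulfI t0).
by rewrite mulr1 -exprS prednK ?expf_card // ltnW ?finNzRing_gt1.
Qed.

Lemma sum_nz_expf_dvd d : (q.-1 %| d)%N -> \sum_(t : F | t != 0) t ^+ d = -1.
Proof.
case/dvdnP=> e ->; rewrite (eq_bigr (fun _ => 1)); last first.
  by move=> t t0; rewrite mulnC exprM expf_card_pred ?expr1n.
rewrite sumr_const card_finField_nz; apply/eqP; rewrite -addr_eq0 natr1.
by rewrite prednK ?natr_card_finField // ltnW ?finNzRing_gt1.
Qed.

(* Reindexing by t |-> l t gives S = l^m S, and some l != 0 has l^m != 1 since
   'X^m - 1 has at most m < q - 1 roots. *)
Lemma sum_expf_small m : (m < q.-1)%N -> \sum_(t : F) t ^+ m = 0.
Proof.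
case: m => [_|m hm].
  by rewrite (eq_bigr (fun _ => 1)) // sumr_const natr_card_finField.
have [l l0 lm] : exists2 l : F, l != 0 & l ^+ m.+1 != 1.
  apply/exists_inP; apply: contraT; rewrite negb_exists => /forallP unity.
  have := @max_poly_roots _ ('X ^+ m.+1 - 1 : {poly F}) (enum [pred l : F | l != 0]).
  rewrite -size_poly_eq0 size_XnsubC // -cardE card_finField_nz ltnNge hm.
  apply=> //; last exact: enum_uniq.
  apply/allP => x; rewrite mem_enum inE rootE !hornerE subr_eq0 => x0.
  by move: (unity x); rewrite x0 negbK.
have: \sum_(t : F) t ^+ m.+1 = l ^+ m.+1 * \sum_(t : F) t ^+ m.+1.
  rewrite [LHS](reindex_inj (mulfI l0)) mulr_sumr.
  by apply: eq_bigr => t _; rewrite exprMn.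
move/eqP; rewrite -subr_eq0 -{1}(mul1r (\sum__ _)) -mulrBl mulf_eq0.
by rewrite subr_eq0 eq_sym (negbTE lm) => /eqP.
Qed.

Lemma sum_expf_card_pred : \sum_(t : F) t ^+ q.-1 = -1.
Proof.
rewrite (bigD1 0) //= expr0n eqn0Ngt card_finField_pred_gt0 add0r.
exact: sum_nz_expf_dvd.
Qed.

End PowerSums.

Section AffineSums.
Variables (F : finFieldType) (m : nat).
Local Notation q := #|F|.

Lemma sum_prod_expf (e : 'I_m -> nat) :
  \sum_(x : {ffun 'I_m -> F}) \prod_i x i ^+ e i = \prod_i \sum_(t : F) t ^+ e i.
Proof. by rewrite bigA_distr_bigA. Qed.

(* Every monomial of degree < m (q - 1) has an exponent < q - 1, whose factor
   in sum_prod_expf vanishes. *)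
Lemma sum_meval_homog_small (p : {mpoly F[m]}) d :
  p \is d.-homog -> (d < m * q.-1)%N -> \sum_(x : {ffun 'I_m -> F}) p.@[x] = 0.
Proof.
move=> /dhomogP hp hd; under eq_bigr => x _ do rewrite mevalE.
rewrite exchange_big big1_seq //= => mu mu_p.
rewrite -mulr_sumr sum_prod_expf.
have [i lt_i] : exists i, (mu i < q.-1)%N.
  apply/existsP; apply: contraLR hd; rewrite negb_exists -leqNgt => /forallP ge.
  rewrite -(hp _ mu_p) /= mdegE -[m in (m * _)%N]card_ord -sum_nat_const.
  by apply: leq_sum => i _; rewrite leqNgt ge.
by rewrite (bigD1 i) //= sum_expf_small ?mul0r ?mulr0.
Qed.

Lemma sum_prod_expf_card_pred :
  \sum_(x : {ffun 'I_m -> F}) \prod_i x i ^+ q.-1 = (-1) ^+ m.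
Proof.
rewrite sum_prod_expf (eq_bigr _ (fun _ _ => sum_expf_card_pred F)).
by rewrite prodr_const card_ord.
Qed.

End AffineSums.

Section ProjectiveSums.
Variables (F : finFieldType) (n : nat).
Local Notation q := #|F|.
Local Notation V := {ffun 'I_n.+1 -> F}.

Definition dilate (l : F) (x : V) : V := [ffun i => l * x i].

Lemma prod_expf_dilate (e : 'I_n.+1 -> nat) l x :
  \prod_i dilate l x i ^+ e i = l ^+ (\sum_i e i) * \prod_i x i ^+ e i.
Proof.
rewrite -prodrXr -big_split /=; apply: eq_bigr => i _.
by rewrite ffunE exprMn.
Qed.

Lemma meval_dilate (p : {mpoly F[n.+1]}) d l x :
  p \is d.-homog -> p.@[dilate l x] = l ^+ d * p.@[x].
Proof.
move=> /dhomogP hp; rewrite !mevalE mulr_sumr; apply: eq_big_seq => mu mu_p.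
by rewrite mulrCA prod_expf_dilate -mdegE (hp _ mu_p).
Qed.

Lemma normalizedP (x : V) :
  reflect (exists i, x i = 1 /\ forall j : 'I_n.+1, (j < i)%N -> x j = 0)
          (normalized x).
Proof.
apply: (iffP existsP) => [[i /andP [/eqP xi /forall_inP lead]]|[i [xi lead]]].
  by exists i; split=> // j /lead /eqP.
by exists i; rewrite xi eqxx; apply/forall_inP => j /lead ->.
Qed.

Lemma normalized_coord0 (x : V) : normalized x -> x ord0 = 0 \/ x ord0 = 1.
Proof.
case/normalizedP => i [xi lead]; have [i0|i_gt0] := posnP i; last by left; apply: lead.
by right; rewrite -xi; congr (x _); apply: val_inj.
Qed.

Lemma dilate_point_inj : {in [pred lP : F * PPoint F n | lP.1 != 0] &,
  injective (fun lP => dilate lP.1 (val lP.2))}.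
Proof.
move=> [l P] [l' P']; rewrite !inE /= => l0 l0' eqlP.
have eq_coord x : l * val P x = l' * val P' x.
  by have := congr1 (fun f : V => f x) eqlP; rewrite !ffunE.
have [i [Pi leadP]] := normalizedP _ (valP P).
have [i' [Pi' leadP']] := normalizedP _ (valP P').
have eq_ii' : i = i'.
  case: (ltngtP i i') => [lt_ii'|lt_i'i|]; last exact: val_inj.
  - by have := eq_coord i; rewrite Pi leadP' // mulr1 mulr0 => /eqP; rewrite (negbTE l0).
  - have := eq_coord i'; rewrite Pi' leadP // mulr1 mulr0 => /eqP.
    by rewrite eq_sym (negbTE l0').
subst i'; have eq_ll' : l = l' by have := eq_coord i; rewrite Pi Pi' !mulr1.
subst l'; congr pair; apply/val_inj/ffunP => x.
exact/(mulfI l0)/eq_coord.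
Qed.

(* Each nonzero vector is uniquely l * P with l in F^* and P a normalized point. *)
Lemma sum_ffun_points (g : V -> F) :
  \sum_x g x = g 0 + \sum_(P : PPoint F n) \sum_(l | l != 0) g (dilate l (val P)).
Proof.
rewrite (bigD1 (0 : V)) //=; congr (_ + _).
rewrite exchange_big pair_big_dep /=.
rewrite (eq_bigl (mem [pred lP : F * PPoint F n | lP.1 != 0])); last first.
  by move=> lP; rewrite !inE andbT.
rewrite -(big_imset _ dilate_point_inj) /=; apply: eq_bigl => x.
apply/idP/imsetP => [x0|[[l P]]]; last first.
  rewrite inE /= => l0 ->; apply: contra l0 => /eqP eqP0.
  have [i [Pi _]] := normalizedP _ (valP P).
  by have := congr1 (fun f : V => f i) eqP0; rewrite !ffunE Pi mulr1 => ->.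
have [t xt] : exists t, x t != 0.
  apply/existsP; apply: contraR x0; rewrite negb_exists => /forallP x0.
  by apply/eqP/ffunP => t; rewrite ffunE; apply/eqP/negPn.
have [i xi imin] := @arg_minnP _ t (fun j => x j != 0) val xt.
pose y := dilate (x i)^-1 x.
have y_norm : normalized y.
  apply/normalizedP; exists i; rewrite ffunE mulVf //; split=> // j lt_ji.
  rewrite ffunE; have [->|xj] := eqVneq (x j) 0; first by rewrite mulr0.
  by have := imin j xj; rewrite leqNgt lt_ji.
exists (x i, exist _ y y_norm : PPoint F n); first by rewrite inE.
by apply/ffunP => j; rewrite /= !ffunE mulrA mulfV // mul1r.
Qed.

Lemma sum_points_homog (g : V -> F) d :
  (forall l x, g (dilate l x) = l ^+ d * g x) -> (0 < d)%N -> (q.-1 %| d)%N ->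
  \sum_(P : PPoint F n) g (val P) = - \sum_x g x.
Proof.
move=> g_homog d_gt0 dvd_d; rewrite sum_ffun_points.
have -> : g 0 = 0.
  have -> : (0 : V) = dilate 0 0 by apply/ffunP => i; rewrite !ffunE mul0r.
  by rewrite g_homog expr0n gtn_eqF // mul0r.
rewrite add0r -sumrN; apply: eq_bigr => P _.
under eq_bigr => l _ do rewrite g_homog.
by rewrite -mulr_suml sum_nz_expf_dvd // mulN1r opprK.
Qed.

End ProjectiveSums.

Section CoordinateFiltration.
Variables (K : fieldType) (N : nat).
Local Notation word := 'rV[K]_N.

Definition restrict (S : {set 'I_N}) : 'End(word) :=
  linfun (mulmxr (diag_mx (\row_i (i \in S)%:R))).

Lemma restrictE (S : {set 'I_N}) (v : word) i : restrict S v 0 i = v 0 i * (i \in S)%:R.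
Proof. by rewrite lfunE /= mul_mx_diag !mxE. Qed.

Lemma restrict_setT : restrict setT = \1%VF.
Proof. by apply/lfunP => v; apply/rowP => i; rewrite restrictE id_lfunE inE mulr1. Qed.

Lemma lker_restrictP (S : {set 'I_N}) (v : word) :
  reflect (forall i, i \in S -> v 0 i = 0) (v \in lker (restrict S)).
Proof.
rewrite memv_ker; apply: (iffP eqP) => [v0 i iS|v0].
  by have := congr1 (fun w : word => w 0 i) v0; rewrite restrictE iS mulr1 mxE.
apply/rowP => i; rewrite restrictE mxE.
by have [/v0 ->|] := boolP (i \in S); rewrite ?mul0r ?mulr0.
Qed.

Definition vanishing (U : {vspace word}) (S : {set 'I_N}) := (U :&: lker (restrict S))%VS.

Lemma dim_vanishing_subset (S S' : {set 'I_N}) U : S' \subset S ->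
  \dim (vanishing U S') = (\dim (vanishing U S) + \dim (restrict S @: vanishing U S'))%N.
Proof.
move=> sub_S'S; rewrite -[LHS](limg_ker_dim (restrict S)) /vanishing -capvA.
congr (\dim (_ :&: _) + _)%N; apply/capv_idPr/subvP => v /lker_restrictP v0.
by apply/lker_restrictP => i /(subsetP sub_S'S)/v0.
Qed.

Variables (T : nat -> {set 'I_N}) (m : nat).
Hypotheses (T0 : T 0%N = setT) (Tm : T m = set0) (TS : forall j, T j.+1 \subset T j).

Definition graded (U : {vspace word}) j := (restrict (T j) @: vanishing U (T j.+1))%VS.

Lemma graded0 U : graded U 0 = vanishing U (T 1).
Proof. by rewrite /graded T0 restrict_setT lim1g. Qed.

Lemma dim_graded_sum U : \dim U = (\sum_(j < m) \dim (graded U j))%N.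
Proof.
have vanishing0 : vanishing U (T 0%N) = 0%VS.
  apply/eqP; rewrite -subv0; apply/subvP => v; rewrite memv_cap memv0.
  case/andP => _ /lker_restrictP v0; apply/eqP/rowP => i.
  by rewrite mxE v0 // T0 inE.
have vanishing_m : vanishing U (T m) = U.
  by apply/capv_idPl/subvP => v _; apply/lker_restrictP => i; rewrite Tm inE.
rewrite -{1}vanishing_m; elim: {vanishing_m}m => [|j IHj].
  by rewrite vanishing0 dimv0 big_ord0.
by rewrite (dim_vanishing_subset _ (TS j)) IHj big_ord_recr.
Qed.

Lemma ltn_dim_graded U W :
  (forall j, (j < m)%N -> (graded U j <= graded W j)%VS) ->
  (exists2 j, (j < m)%N & ~~ (graded W j <= graded U j)%VS) ->
  (\dim U < \dim W)%N.
Proof.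
move=> subUW [j lt_jm not_subWU]; rewrite !dim_graded_sum.
rewrite (bigD1 (Ordinal lt_jm)) // [X in (_ < X)%N](bigD1 (Ordinal lt_jm)) //=.
rewrite -addSn leq_add ?(ltn_leqif (dimv_leqif_sup (subUW _ lt_jm))) //.
by apply: leq_sum => i _; apply/dimvS/subUW.
Qed.

End CoordinateFiltration.

Section ProjectiveCode.
Variables (F : finFieldType) (n : nat).
Local Notation q := #|F|.
Local Notation V := {ffun 'I_n.+1 -> F}.
Local Notation word := 'rV[F]_(NPts F n).
Local Notation code k := <<enum (PRMcode F n k)>>%VS.

Definition point (i : 'I_(NPts F n)) : V := val (@enum_val (PPoint F n) predT i).

Lemma sum_point (g : V -> F) :
  \sum_i g (point i) = \sum_(P : PPoint F n) g (val P).
Proof.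
have := big_enum_val (op := +%R) (idx := 0) (A := @predT (PPoint F n)) (g \o val).
by rewrite /point => <-; apply: eq_bigl => P.
Qed.

Lemma evalvecE (p : {mpoly F[n.+1]}) i : evalvec p 0 i = p.@[point i].
Proof. by rewrite mxE. Qed.

Lemma evalvec0 : evalvec 0 = 0 :> word.
Proof. by apply/rowP => i; rewrite !mxE meval0. Qed.

Lemma evalvecD (p p' : {mpoly F[n.+1]}) : evalvec (p + p') = evalvec p + evalvec p'.
Proof. by apply/rowP => i; rewrite !mxE mevalD. Qed.

Lemma evalvecZ c (p : {mpoly F[n.+1]}) : evalvec (c *: p) = c *: evalvec p.
Proof. by apply/rowP => i; rewrite !mxE mevalZ. Qed.

Lemma codeP k (v : word) :
  reflect (exists2 p : {mpoly F[n.+1]}, p \is k.-homog & v = evalvec p) (v \in code k).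
Proof.
apply: (iffP idP) => [v_code|[p p_homog ->]]; last first.
  by apply: memv_span; rewrite mem_enum inE; apply/asboolP; exists p.
set X := in_tuple (enum (PRMcode F n k)); rewrite (coord_span (X := X) v_code).
apply: (big_ind (fun w => exists2 p, p \is k.-homog & w = evalvec p)).
- by exists 0; rewrite ?evalvec0 ?rpred0.
- by move=> _ _ [p hp ->] [p' hp' ->]; exists (p + p'); rewrite ?rpredD ?evalvecD.
move=> i _; have : X`_i \in PRMcode F n k by rewrite -mem_enum mem_nth.
by rewrite inE => /asboolP [p hp ->]; exists (coord X i v *: p); rewrite ?rpredZ ?evalvecZ.
Qed.

Definition lead_geq (j : nat) : {set 'I_(NPts F n)} :=
  [set i | [forall t : 'I_n.+1, (t < j)%N ==> (point i t == 0)]].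

Lemma lead_geqP j i :
  reflect (forall t : 'I_n.+1, (t < j)%N -> point i t = 0) (i \in lead_geq j).
Proof.
rewrite inE; apply: (iffP forall_inP) => [vanish t /vanish /eqP //|vanish t].
by move/vanish ->.
Qed.

Lemma lead_geq0 : lead_geq 0 = setT.
Proof. by apply/setP => i; rewrite [RHS]inE; apply/lead_geqP. Qed.

Lemma lead_geq_max : lead_geq n.+1 = set0.
Proof.
apply/setP => i; rewrite [RHS]inE; apply/lead_geqP => vanish.
have [t [pt1 _]] := normalizedP _ (valP (enum_val i)).
by move: pt1; rewrite [_ t]vanish // => /eqP; rewrite eq_sym oner_eq0.
Qed.

Lemma lead_geqS j : lead_geq j.+1 \subset lead_geq j.
Proof.
apply/subsetP => i /lead_geqP vanish; apply/lead_geqP => t lt_tj.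
exact/vanish/ltnW.
Qed.

Lemma lead_geq_coord j i : (j < n.+1)%N -> i \in lead_geq j ->
  point i (inord j) = (i \notin lead_geq j.+1)%:R.
Proof.
move=> lt_jn /lead_geqP vanish; have [i_lead|i_nlead] := boolP (i \in lead_geq j.+1).
  by move/lead_geqP: i_lead => -> //; rewrite inordK.
have [t [pt1 lead]] := normalizedP _ (valP (enum_val i)).
have eq_tj : val t = j.
  apply/eqP; rewrite eqn_leq; apply/andP; split; rewrite leqNgt.
    by apply: contraNN i_nlead => lt_jt; apply/lead_geqP => s /leq_trans/(_ lt_jt)/lead.
  by apply/negP => /vanish; rewrite /point pt1 => /eqP; rewrite oner_eq0.
have -> : inord j = t by apply: val_inj; rewrite /= inordK.
by rewrite /point pt1.
Qed.

Lemma dhomog_mulX (p : {mpoly F[n.+1]}) i k :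
  p \is k.-homog -> 'X_i * p \is k.+1.-homog.
Proof.
move=> p_homog; rewrite -[k.+1]add1n; apply: dhomogM p_homog.
by rewrite dhomogX; apply/eqP; exact: mdeg1.
Qed.

(* Multiplication by x_j fixes the words on the points with leading index j
   and kills them on those with leading index > j. *)
Lemma graded_code_mulX k j : (j < n.+1)%N ->
  (graded lead_geq (code k) j <= graded lead_geq (code k.+1) j)%VS.
Proof.
move=> lt_jn; apply/subvP => u /memv_imgP [v]; rewrite memv_cap.
case/andP => /codeP [p p_homog ->] /lker_restrictP p0 ->.
apply/memv_imgP; exists (evalvec ('X_(inord j) * p)).
  rewrite memv_cap; apply/andP; split.
    by apply/codeP; exists ('X_(inord j) * p); rewrite ?dhomog_mulX.
  apply/lker_restrictP => i /lead_geqP vanish.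
  by rewrite evalvecE mevalM mevalXU vanish ?mul0r ?inordK.
apply/rowP => i; rewrite !restrictE.
have [i_lead|] := boolP (i \in lead_geq j); last by rewrite !mulr0.
rewrite !evalvecE mevalM mevalXU lead_geq_coord //.
have [/p0|] := boolP (i \in lead_geq j.+1); last by rewrite mul1r.
by rewrite evalvecE => ->; rewrite !mulr0.
Qed.

Definition dual_word (g : {mpoly F[n.+1]}) (v : word) : F :=
  \sum_i v 0 i * g.@[point i].

Lemma dual_word_evalvec f g :
  dual_word g (evalvec f) = \sum_(P : PPoint F n) (f * g).@[val P].
Proof.
rewrite /dual_word -(sum_point (fun x => (f * g).@[x])).
by apply: eq_bigr => i _; rewrite evalvecE mevalM.
Qed.

(* The projective sum of f g is minus its affine sum, which vanishes since
   n (q - 1) < (n + 1) (q - 1). *)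
Lemma dual_word_homog_eq0 f g : (0 < n)%N ->
  f * g \is (n * q.-1).-homog -> dual_word g (evalvec f) = 0.
Proof.
move=> n_gt0 fg_homog; rewrite dual_word_evalvec.
rewrite (@sum_points_homog F n (fun x => (f * g).@[x]) (n * q.-1)) ?dvdn_mull //;
  first last.
- by rewrite muln_gt0 n_gt0 card_finField_pred_gt0.
- by move=> l x; rewrite (meval_dilate _ _ fg_homog).
by rewrite (sum_meval_homog_small fg_homog) ?oppr0 // ltn_mul2r card_finField_pred_gt0 /=.
Qed.

End ProjectiveCode.

Lemma exists_bounded_composition (c m k : nat) : (k <= m * c)%N ->
  exists a : nat -> nat,
    [/\ a 0%N = 0%N, forall i, (a i <= c)%N & (\sum_(i < m.+1) a i)%N = k].
Proof.
elim: m k => [|m IHm] k le_k.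
  exists (fun _ => 0%N); split => //.
  by rewrite big_ord1; move: le_k; rewrite mul0n leqn0 => /eqP.
have [a [a0 a_le sum_a]] := IHm (k - minn c k)%N (ltac:(rewrite mulSn in le_k; lia)).
exists (fun i => if i == m.+1 then minn c k else a i); split => //.
  by move=> i; case: (i == m.+1) => //; apply: geq_minl.
rewrite big_ord_recr /= eqxx (eq_bigr (fun i : 'I_m.+1 => a i)).
  by rewrite sum_a; lia.
by move=> i _; rewrite ifN // neq_ltn ltn_ord.
Qed.

Section Witness.
Variables (F : finFieldType) (n k : nat) (a : nat -> nat).
Local Notation q := #|F|.
Local Notation code k := <<enum (PRMcode F n k)>>%VS.
Hypotheses (n_gt0 : (0 < n)%N) (a0 : a 0%N = 0%N) (a_le : forall i, (a i <= q.-1)%N)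
  (sum_a : (\sum_(i < n.+1) a i)%N = k).

Definition witness_exps : 'X_{1..n.+1} := [multinom a i | i < n.+1].

Definition dual_exps : 'X_{1..n.+1} :=
  [multinom if val i == 0%N then 0%N else (q.-1 - a i)%N | i < n.+1].

Definition witness : {mpoly F[n.+1]} := 'X_ord0 * 'X_[witness_exps].

Lemma witness_homog : witness \is k.+1.-homog.
Proof.
apply: dhomog_mulX; rewrite dhomogX; apply/eqP.
by rewrite [LHS]mdegE -sum_a; apply: eq_bigr => i _; rewrite mnmE.
Qed.

Lemma mdeg_dual_exps : (k + mdeg dual_exps)%N = (n * q.-1)%N.
Proof.
rewrite mdegE -sum_a -big_split big_ord_recl /= !mnmE a0 /=.
rewrite (eq_bigr (fun _ => q.-1)) ?sum_nat_const ?card_ord 1?mulnC //.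
by move=> i _; rewrite mnmE subnKC.
Qed.

Lemma dual_word_code_eq0 v : v \in code k -> dual_word 'X_[dual_exps] v = 0.
Proof.
case/codeP => f f_homog ->; apply: dual_word_homog_eq0 n_gt0 _.
by rewrite -mdeg_dual_exps; apply: dhomogM f_homog _; rewrite dhomogX.
Qed.

(* At a normalized point the first coordinate is 0 or 1, so the factor x_0 of
   the witness may be replaced by x_0^(q-1). *)
Lemma dual_word_witness : dual_word 'X_[dual_exps] (evalvec witness) = (-1) ^+ n.
Proof.
have pointwise (P : PPoint F n) :
    (witness * 'X_[dual_exps]).@[val P] = \prod_t val P t ^+ q.-1.
  rewrite !mevalM mevalXU !mevalX -mulrA -big_split /=.
  rewrite [RHS]big_ord_recl big_ord_recl !mnmE a0 /= expr0.
  rewrite (eq_bigr (fun t => val P (lift ord0 t) ^+ q.-1)); last first.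
    by move=> t _; rewrite !mnmE -exprD subnKC.
  case: (normalized_coord0 (valP P)) => ->; last by rewrite expr1n !mul1r.
  by rewrite expr0n gtn_eqF ?card_finField_pred_gt0 // !mul0r.
rewrite dual_word_evalvec; under eq_bigr => P _ do rewrite pointwise.
rewrite (@sum_points_homog F n (fun x => \prod_t x t ^+ q.-1) (n.+1 * q.-1)); first last.
- by rewrite dvdn_mull.
- by rewrite muln_gt0 card_finField_pred_gt0.
- by move=> l x; rewrite prod_expf_dilate sum_nat_const card_ord.
by rewrite sum_prod_expf_card_pred exprS mulN1r opprK.
Qed.

Lemma witness_notin_code : evalvec witness \notin code k.
Proof.
apply/negP => /dual_word_code_eq0; rewrite dual_word_witness => /eqP.
by rewrite signr_eq0.
Qed.

Lemma graded_code0_strict :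
  ~~ (graded (lead_geq F n) (code k.+1) 0 <= graded (lead_geq F n) (code k) 0)%VS.
Proof.
rewrite !(graded0 (lead_geq0 F n)); apply/negP => /subvP sub_code.
have : evalvec witness \in vanishing (code k.+1) (lead_geq F n 1).
  rewrite memv_cap; apply/andP; split.
    by apply/codeP; exists witness; rewrite ?witness_homog.
  apply/lker_restrictP => i /lead_geqP vanish.
  by rewrite evalvecE mevalM mevalXU vanish ?mul0r.
by move/sub_code; rewrite memv_cap (negbTE witness_notin_code).
Qed.

End Witness.

Theorem mainTheorem1 (F : finFieldType) (n k : nat) :
  (1 <= n)%N -> (1 <= k)%N -> (k < n * (#|F| - 1))%N ->
  (PRMdim F n k < PRMdim F n k.+1)%N.
Proof.
move=> n_gt0 _ lt_k; rewrite subn1 in lt_k.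
have [a [a0 a_le sum_a]] := exists_bounded_composition (ltnW lt_k).
apply: (ltn_dim_graded (lead_geq0 F n) (lead_geq_max F n) (@lead_geqS F n)).
  exact: graded_code_mulX.
by exists 0%N; last exact: graded_code0_strict n_gt0 a0 a_le sum_a.
Qed.
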